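(* Let $G$ be a finite abelian group with $|G|>1$ which is not a cyclic group of prime power order, and let $A$ be a non-empty subset of $G$. Then there exists a subgroup $H$ of $G$ of prime order such that $$|\{a+H\in G/H:\ A\cap(a+H)\neq\emptyset\}|\geq\sqrt{|A|}.$$
   Context: For a subgroup $H$ of $G$, $G/H$ is the set of cosets $a+H$; the quantity on the left is the number of cosets of $H$ that meet $A$. *)

From mathcomp Require Import all_boot all_fingroup all_solvable.
Set Implicit Arguments. Unset Strict Implicit. Unset Printing Implicit Defensive.
Local Open Scope group_scope.

(* Number of cosets x H (x in G) of H that meet A: the set of cosets a H, a in A. *)
Definition cosets_meeting (gT : finGroupType) (H A : {set gT}) : nat :=
  #|[set a *: H | a in A]|.

From mathcomp Require Import all_boot all_fingroup all_solvable.

Set Implicit Arguments.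
Unset Strict Implicit.
Unset Printing Implicit Defensive.
Local Open Scope group_scope.

(* If H1 and H2 intersect trivially, a |-> (a H1, a H2) is injective, so A is
   covered by at most m1 * m2 pairs of cosets, where mi counts the cosets of Hi
   meeting A; hence the larger of m1, m2 is at least sqrt |A|.  Such a pair of
   subgroups of prime order exists: two primes dividing |G| give one by Cauchy's
   theorem, and if |G| is a prime power then G is non-cyclic, hence of rank at
   least 2, so it contains two distinct subgroups of order p. *)

Lemma leq_card_mul_cosets_meeting (gT : finGroupType) (H1 H2 : {group gT})
    (A : {set gT}) :
  H1 :&: H2 = 1 -> (#|A| <= cosets_meeting H1 A * cosets_meeting H2 A)%N.
Proof.
move=> tiH12; rewrite /cosets_meeting -cardsX.
have inj_cosets : {in A &, injective (fun a => (a *: H1, a *: H2))}.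
  move=> a b _ _ [e1 e2].
  have: b^-1 * a \in H1 :&: H2 by rewrite inE -!mem_lcoset -e1 -e2 !lcoset_refl.
  by rewrite tiH12 => /set1gP ab1; rewrite -(mulKVg b a) ab1 mulg1.
rewrite -(card_in_imset inj_cosets); apply: subset_leq_card.
by apply/subsetP => _ /imsetP [a aA ->]; apply/setXP; split; apply: imset_f.
Qed.

Lemma not_prime_power_two_prime_divisors (n : nat) :
  1 < n -> ~ (exists p k, prime p /\ n = (p ^ k)%N) ->
  exists p q, [/\ prime p, prime q, p %| n, q %| n & p != q].
Proof.
move=> n_gt1 not_ppow; set p := pdiv n.
have n_gt0 : 0 < n by apply: ltnW.
have not_pnat : ~~ p.-nat n.
  apply: contra_notN not_ppow => pnat_n.
  by exists p, (logn p n); rewrite -p_part part_pnat_id // pdiv_prime.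
move: not_pnat; rewrite /pnat n_gt0 -has_predC => /hasP [q].
rewrite mem_primes n_gt0 => /andP [q_pr q_dvd] /= q_p.
by exists p, q; rewrite pdiv_prime ?pdiv_dvd // eq_sym.
Qed.

Lemma two_primes_TI_subgroups (gT : finGroupType) (G : {group gT}) (p q : nat) :
  prime p -> prime q -> p %| #|G| -> q %| #|G| -> p != q ->
  exists H1 H2 : {group gT},
    [/\ H1 \subset G, H2 \subset G, prime #|H1|, prime #|H2| & H1 :&: H2 = 1].
Proof.
move=> p_pr q_pr p_dvd q_dvd pq.
have [x xG ox] := Cauchy p_pr p_dvd; have [y yG oy] := Cauchy q_pr q_dvd.
exists <[x]>%G, <[y]>%G; rewrite !cycle_subG -/#[x] -/#[y] ox oy; split=> //.
apply: prime_TIg; rewrite /= -/#[x] ?ox //; apply: contra pq => /cardSg.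
by rewrite -/#[x] -/#[y] ox oy dvdn_prime2.
Qed.

Lemma noncyclic_abelian_TI_subgroups (gT : finGroupType) (G : {group gT}) :
  abelian G -> ~~ cyclic G ->
  exists H1 H2 : {group gT},
    [/\ H1 \subset G, H2 \subset G, prime #|H1|, prime #|H2| & H1 :&: H2 = 1].
Proof.
move=> abG ncycG; have [p p_pr rG] := rank_witness G.
have rank_ge2 : 2 <= 'r_p(G) by rewrite -rG ltnNge -abelian_rank1_cyclic.
have [E /pnElemPcard [sEG abelE cardE]] := p_rank_geP rank_ge2.
have p_gt1 := prime_gt1 p_pr.
have [x Ex x1] : exists2 x, x \in E & x != 1.
  by apply/trivgPn; rewrite trivg_card1 cardE (eqn_exp2l 2 0).
have ox := abelem_order_p abelE Ex x1.
have /subsetPn [y Ey y_notin_x] : ~~ (E \subset <[x]>).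
  apply/negP => /subset_leq_card; apply/negP.
  by rewrite cardE -/#[x] ox -ltnNge -{1}(expn1 p) ltn_exp2l.
have y1 : y != 1 by apply: contraNneq y_notin_x => ->.
have oy := abelem_order_p abelE Ey y1.
exists <[y]>%G, <[x]>%G; rewrite !cycle_subG -/#[x] -/#[y] ox oy.
rewrite !(subsetP sEG) //; split=> //.
by apply: prime_TIg; rewrite ?cycle_subG // -/#[y] oy.
Qed.

Lemma abelian_TI_prime_subgroups (gT : finGroupType) (G : {group gT}) :
  abelian G -> 1 < #|G| ->
  ~ (cyclic G /\ exists p k, prime p /\ #|G| = (p ^ k)%N) ->
  exists H1 H2 : {group gT},
    [/\ H1 \subset G, H2 \subset G, prime #|H1|, prime #|H2| & H1 :&: H2 = 1].
Proof.
move=> abG G_gt1 not_cyc_ppow; have [cycG | ncycG] := boolP (cyclic G).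
  have [|p [q [p_pr q_pr p_dvd q_dvd pq]]] :=
    not_prime_power_two_prime_divisors G_gt1.
    by move=> ppow; apply: not_cyc_ppow.
  exact: two_primes_TI_subgroups p_pr q_pr p_dvd q_dvd pq.
exact: noncyclic_abelian_TI_subgroups.
Qed.

Theorem mainTheorem7 (gT : finGroupType) (G : {group gT}) (A : {set gT}) :
  abelian G -> 1 < #|G| ->
  ~ (cyclic G /\ exists p k, prime p /\ #|G| = (p ^ k)%N) ->
  A \subset G -> A != set0 ->
  exists H : {group gT},
    [/\ H \subset G, prime #|H| & #|A| <= (cosets_meeting H A ^ 2)%N].
Proof.
move=> abG G_gt1 not_cyc_ppow _ _.
have [H1 [H2 [sH1G sH2G H1_pr H2_pr tiH12]]] :=
  abelian_TI_prime_subgroups abG G_gt1 not_cyc_ppow.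
have leA := leq_card_mul_cosets_meeting A tiH12.
have [le21 | lt12] := leqP (cosets_meeting H2 A) (cosets_meeting H1 A).
  by exists H1; split=> //; rewrite (leq_trans leA) // leq_mul2l le21 orbT.
by exists H2; split=> //; rewrite (leq_trans leA) // leq_mul2r ltnW ?orbT.
Qed.
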